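(* Let $0<q<1$, let $k$ be a nonnegative integer, $n$ a positive integer, and $x\in[0,1]$. Then $$\left(\frac{n-k}{n}\right)B_{k,n}(x,q)+\left(\frac{k+1}{n}\right)B_{k+1,n}(x,q)=B_{k,n-1}(x,q)+(1-q)[x]_q[1-x]_q\,B_{k,n-1}(x,q).$$
   Context: Let $q$ be a real number with $0<q<1$. For real $x$, the $q$-number is $[x]_q=\frac{1-q^x}{1-q}$. For a nonnegative integer $k$ and $x\in[0,1]$, the modified $q$-Bernstein polynomials $B_{k,n}(x,q)$, $n=0,1,2,\dots$, are defined by the generating function $$\frac{t^k e^{[1-x]_q t}[x]_q^k}{k!}=\sum_{n=0}^\infty B_{k,n}(x,q)\frac{t^n}{n!}.$$ *)

From Stdlib Require Import Reals.
From Coquelicot Require Import Coquelicot.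
Open Scope R_scope.

Definition qnum (q x : R) : R := (1 - Rpower q x) / (1 - q).

Definition qB_gen (k : nat) (x q : R) (t : R) : R :=
  t ^ k * exp (qnum q (1 - x) * t) * (qnum q x) ^ k / INR (Factorial.fact k).

(* B_{k,n}(x,q) is the coefficient of t^n/n! in the expansion of the
   (entire) generating function, i.e. its n-th derivative at t = 0. *)
Definition qBernstein (k n : nat) (x q : R) : R :=
  Derive_n (qB_gen k x q) n 0.

(* Up to the factor [x]_q^k / k!, the generating function of B_{k,n} is
   t^k e^{a t} with a = [1-x]_q, whose n-th derivative at 0 is
   k! C(n,k) a^(n-k).  Hence B_{k,n}(x,q) = C(n,k) [x]_q^k [1-x]_q^(n-k), and
   the usual degree-reduction identity for Bernstein polynomials gives the
   left-hand side as ([x]_q + [1-x]_q) B_{k,n-1}.  Finally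
   [x]_q + [1-x]_q = 1 + (1-q)[x]_q[1-x]_q because q^x q^(1-x) = q. *)

From Stdlib Require Import Reals Lra Lia.
From Coquelicot Require Import Coquelicot.
Open Scope R_scope.

Lemma Derive_n_S_Derive (f : R -> R) (m : nat) (x : R) :
  Derive_n f (S m) x = Derive_n (Derive f) m x.
Proof. rewrite <- Nat.add_1_r, <- (Derive_n_comp f m 1). reflexivity. Qed.

Lemma ex_derive_n_S_Derive (f : R -> R) (m : nat) :
  (forall x, ex_derive f x) -> (forall x, ex_derive_n (Derive f) m x) ->
  forall x, ex_derive_n f (S m) x.
Proof.
  intros Hf Hdf x. destruct m as [|m]; [exact (Hf x)|].
  apply (ex_derive_ext (Derive_n (Derive f) m)); [|exact (Hdf x)].
  intro t. symmetry. apply Derive_n_S_Derive.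
Qed.

Definition monexp (a : R) (k : nat) (t : R) : R := t ^ k * exp (a * t).

Section Monexp.
Variable a : R.

Lemma Derive_monexp (k : nat) (t : R) :
  Derive (monexp a k) t = INR k * monexp a (pred k) t + a * monexp a k t.
Proof. apply is_derive_unique. unfold monexp. auto_derive; auto. ring. Qed.

Lemma ex_derive_n_monexp (j k : nat) (x : R) : ex_derive_n (monexp a k) j x.
Proof.
  revert k x. induction j as [j IH] using Wf_nat.lt_wf_ind. intros k x.
  destruct j as [|j]; [exact I|].
  apply ex_derive_n_S_Derive; clear x.
  - intro x. unfold monexp. auto_derive. exact I.
  - intro x. eapply ex_derive_n_ext.
    { intro t. symmetry. apply Derive_monexp. }
    apply ex_derive_n_plus; exists (mkposreal 1 Rlt_0_1); intros y _ i Hi;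
      apply ex_derive_n_scal_l, IH; lia.
Qed.

Lemma Derive_n_monexp_S (k m : nat) (t : R) :
  Derive_n (monexp a k) (S m) t =
  INR k * Derive_n (monexp a (pred k)) m t + a * Derive_n (monexp a k) m t.
Proof.
  rewrite Derive_n_S_Derive, (Derive_n_ext _ _ _ _ (Derive_monexp k)).
  rewrite Derive_n_plus, !Derive_n_scal_l; [reflexivity| |];
    exists (mkposreal 1 Rlt_0_1); intros y _ i _;
    apply ex_derive_n_scal_l, ex_derive_n_monexp.
Qed.

Definition monexp_coef (k m : nat) : R :=
  if Compare_dec.le_dec k m then Binomial.C m k * a ^ (m - k) else 0.

Lemma monexp_coef_0_l (m : nat) : monexp_coef 0 m = a ^ m.
Proof.
  unfold monexp_coef, Binomial.C. destruct (Compare_dec.le_dec 0 m); [|lia].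
  rewrite Nat.sub_0_r. simpl. field. apply INR_fact_neq_0.
Qed.

Lemma monexp_coef_S_0 (k : nat) : monexp_coef (S k) 0 = 0.
Proof. unfold monexp_coef. destruct (Compare_dec.le_dec (S k) 0); [lia|reflexivity]. Qed.

Lemma monexp_coef_pascal (k m : nat) :
  monexp_coef (S k) (S m) = monexp_coef k m + a * monexp_coef (S k) m.
Proof.
  unfold monexp_coef.
  destruct (Compare_dec.le_dec (S k) (S m)), (Compare_dec.le_dec k m),
    (Compare_dec.le_dec (S k) m); try lia.
  - rewrite <- (Binomial.pascal m k) by lia.
    replace (S m - S k)%nat with (S (m - S k)) by lia.
    replace (m - k)%nat with (S (m - S k)) by lia. simpl. ring.
  - assert (k = m) by lia. subst k.
    unfold Binomial.C. rewrite !Nat.sub_diag. simpl pow.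
    field. repeat split; apply INR_fact_neq_0.
  - ring.
Qed.

Lemma Derive_n_monexp_0 (k m : nat) :
  Derive_n (monexp a k) m 0 = INR (Factorial.fact k) * monexp_coef k m.
Proof.
  revert k. induction m as [|m IH]; intro k.
  - destruct k as [|k].
    + rewrite monexp_coef_0_l. unfold monexp. simpl. rewrite Rmult_0_r, exp_0. ring.
    + rewrite monexp_coef_S_0. unfold monexp. simpl. ring.
  - rewrite Derive_n_monexp_S, !IH. destruct k as [|k].
    + rewrite !monexp_coef_0_l. simpl. ring.
    + rewrite monexp_coef_pascal.
      change (Factorial.fact (S k)) with (S k * Factorial.fact k)%nat.
      rewrite mult_INR. simpl pred. ring.
Qed.

End Monexp.

Lemma qBernstein_explicit (k n : nat) (x q : R) :
  qBernstein k n x q = qnum q x ^ k * monexp_coef (qnum q (1 - x)) k n.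
Proof.
  unfold qBernstein.
  rewrite (Derive_n_ext _
    (fun t => monexp (qnum q (1 - x)) k t * (qnum q x ^ k / INR (Factorial.fact k)))).
  - rewrite Derive_n_scal_r, Derive_n_monexp_0. field. apply INR_fact_neq_0.
  - intro t. unfold qB_gen, monexp, Rdiv. ring.
Qed.

Lemma binomial_succ_l_mul (n k : nat) : (k <= n)%nat ->
  (INR (S n) - INR k) * Binomial.C (S n) k = INR (S n) * Binomial.C n k.
Proof.
  intro Hk. unfold Binomial.C.
  replace (S n - k)%nat with (S (n - k)) by lia.
  change (Factorial.fact (S n)) with (S n * Factorial.fact n)%nat.
  change (Factorial.fact (S (n - k))) with (S (n - k) * Factorial.fact (n - k))%nat.
  rewrite !mult_INR.
  replace (INR (S n) - INR k) with (INR (S (n - k)))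
    by (rewrite !S_INR, minus_INR by exact Hk; ring).
  field. repeat split; apply INR_fact_neq_0 || (apply not_0_INR; lia).
Qed.

Lemma binomial_succ_mul (n k : nat) : (k <= n)%nat ->
  (INR k + 1) * Binomial.C (S n) (S k) = INR (S n) * Binomial.C n k.
Proof.
  intro Hk. unfold Binomial.C.
  replace (S n - S k)%nat with (n - k)%nat by lia.
  change (Factorial.fact (S n)) with (S n * Factorial.fact n)%nat.
  change (Factorial.fact (S k)) with (S k * Factorial.fact k)%nat.
  rewrite !mult_INR, <- S_INR.
  field. repeat split; apply INR_fact_neq_0 || (apply not_0_INR; lia).
Qed.

Lemma bernstein_degree_reduction (a b : R) (k n : nat) :
  (INR (S n) - INR k) / INR (S n) * (b ^ k * monexp_coef a k (S n))
  + (INR k + 1) / INR (S n) * (b ^ S k * monexp_coef a (S k) (S n))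
  = (b + a) * (b ^ k * monexp_coef a k n).
Proof.
  assert (HSn : INR (S n) <> 0) by apply not_0_INR, Nat.neq_succ_0.
  unfold monexp_coef.
  destruct (Compare_dec.le_dec k (S n)), (Compare_dec.le_dec (S k) (S n)),
    (Compare_dec.le_dec k n); try lia.
  - replace (S n - k)%nat with (S (n - k)) by lia.
    replace (S n - S k)%nat with (n - k)%nat by lia.
    transitivity (((INR (S n) - INR k) * Binomial.C (S n) k * a
                   + (INR k + 1) * Binomial.C (S n) (S k) * b)
                  / INR (S n) * b ^ k * a ^ (n - k)).
    { simpl. field. exact HSn. }
    rewrite binomial_succ_l_mul, binomial_succ_mul by lia. field. exact HSn.
  - replace k with (S n) by lia. rewrite Rminus_diag. unfold Rdiv. ring.
  - ring.
Qed.

Lemma qnum_add_compl (q x : R) : 0 < q < 1 ->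
  qnum q x + qnum q (1 - x) = 1 + (1 - q) * qnum q x * qnum q (1 - x).
Proof.
  intro Hq.
  assert (Hprod : Rpower q x * Rpower q (1 - x) = q).
  { rewrite <- Rpower_plus. replace (x + (1 - x)) with 1 by ring. apply Rpower_1. lra. }
  unfold qnum. set (P := Rpower q x) in *. set (Q := Rpower q (1 - x)) in *.
  field_simplify_eq; [rewrite <- Hprod; ring | lra].
Qed.

Theorem theorem4 (q : R) (k n : nat) (x : R) :
  0 < q < 1 -> (0 < n)%nat -> 0 <= x <= 1 ->
  ((INR n - INR k) / INR n) * qBernstein k n x q
  + ((INR k + 1) / INR n) * qBernstein (S k) n x q
  = qBernstein k (n - 1) x q
    + (1 - q) * qnum q x * qnum q (1 - x) * qBernstein k (n - 1) x q.
Proof.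
  (* The identity holds for every real x. *)
  intros Hq Hn _.
  destruct n as [|n]; [lia|]. rewrite Nat.sub_1_r. simpl pred.
  rewrite !qBernstein_explicit, bernstein_degree_reduction, qnum_add_compl by exact Hq.
  ring.
Qed.
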